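(* Let $R$ be an associative unital division ring over a field $F$ of characteristic $0$, let $\lambda\in F$, and let $\theta_{m,n}\in R$ be invertible for all $(m,n)\in\mathbb{Z}^2$. Define the $2\times2$ matrices $$\mathcal{L}_{m,n}=\begin{pmatrix}\lambda-\theta_{m+1,n}\theta_{m+2,n-1}^{-1}-\theta_{m+2,n}\theta_{m+1,n}^{-1} & -\theta_{m+1,n}\\ \theta_{m+1,n}^{-1} & 0\end{pmatrix},\qquad \mathcal{M}_{m,n}=\begin{pmatrix}1 & \theta_{m,n}\\ -\theta_{m+1,n-1}^{-1} & \lambda-\theta_{m+1,n-1}^{-1}\theta_{m,n}\end{pmatrix}.$$ If $\theta$ satisfies $\theta_{m+2,n}=\theta_{m,n+1}+\theta_{m+1,n}(\theta_{m,n}^{-1}-\theta_{m+2,n-1}^{-1})\theta_{m+1,n}$ for all $(m,n)$, then $\mathcal{L}_{m-1,n}\mathcal{M}_{m,n}=\mathcal{M}_{m,n+1}\mathcal{L}_{m,n}$ for all $(m,n)\in\mathbb{Z}^2$. *)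

From HB Require Import structures.
From mathcomp Require Import all_boot all_order all_algebra.
Set Implicit Arguments. Unset Strict Implicit. Unset Printing Implicit Defensive.
Import Order.TTheory GRing.Theory Num.Theory.
Local Open Scope ring_scope.

Definition mx2 (R : nzRingType) (a b c d : R) : 'M[R]_2 :=
  \matrix_(i < 2, j < 2)
    if i == 0 :> nat then (if j == 0 :> nat then a else b)
    else (if j == 0 :> nat then c else d).

Definition Lmx (F : fieldType) (R : unitAlgType F) (lam : F) (th : int -> int -> R)
  (m n : int) : 'M[R]_2 :=
  mx2 (lam%:A - th (m + 1) n * (th (m + 2) (n - 1))^-1
              - th (m + 2) n * (th (m + 1) n)^-1)
      (- th (m + 1) n)
      ((th (m + 1) n)^-1)
      0.

Definition Mmx (F : fieldType) (R : unitAlgType F) (lam : F) (th : int -> int -> R)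
  (m n : int) : 'M[R]_2 :=
  mx2 1 (th m n)
      (- (th (m + 1) (n - 1))^-1)
      (lam%:A - (th (m + 1) (n - 1))^-1 * th m n).

From HB Require Import structures.
From mathcomp Require Import all_boot all_order all_algebra.
Import Order.TTheory GRing.Theory Num.Theory.
Local Open Scope ring_scope.

(* Both products equal LMmx m n.  For L_{m-1,n} M_{m,n} this only needs lambda to
   be central and theta_{m,n} invertible.  In M_{m,n+1} L_{m,n} the only
   non-trivial entry is the lower-left one, theta_{m+2,n-1}^-1 +
   theta_{m+1,n}^-1 (theta_{m+2,n} - theta_{m,n+1}) theta_{m+1,n}^-1, and the
   recurrence says precisely that it is theta_{m,n}^-1. *)

Lemma mulmx2 (R : nzRingType) (a b c d a' b' c' d' : R) :
  mx2 a b c d *m mx2 a' b' c' d' =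
  mx2 (a * a' + b * c') (a * b' + b * d') (c * a' + d * c') (c * b' + d * d').
Proof.
apply/matrixP => i j; rewrite !mxE !big_ord_recl big_ord0 addr0 !mxE /=.
by case: i => [[|[|//]] ?]; case: j => [[|[|//]] ?].
Qed.

Section LaxPair.

Variables (F : fieldType) (R : unitAlgType F) (lam : F) (th : int -> int -> R).

Definition LMmx (m n : int) : 'M[R]_2 :=
  mx2 (lam%:A - th (m + 1) n * (th m n)^-1) (- th (m + 1) n) (th m n)^-1 1.

Lemma Lmx_prev_Mmx (m n : int) : th m n \is a GRing.unit ->
  Lmx lam th (m - 1) n *m Mmx lam th m n = LMmx m n.
Proof.
move=> t_unit; rewrite /Lmx /Mmx /LMmx subrK.
have -> : m - 1 + 2 = m + 1 by rewrite -addrA.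
rewrite mulmx2; congr mx2.
- by rewrite mulr1 mulrNN addrAC subrK.
- rewrite !mulrDl !mulNr divrK // mulrBr comm_alg mulrA.
  by rewrite addrAC subrr add0r.
- by rewrite mulr1 mul0r addr0.
- by rewrite mulVr // mul0r addr0.
Qed.

Lemma Mmx_next_Lmx (m n : int) : th (m + 1) n \is a GRing.unit ->
  th (m + 2) n = th m (n + 1)
    + th (m + 1) n * ((th m n)^-1 - (th (m + 2) (n - 1))^-1) * th (m + 1) n ->
  Mmx lam th m (n + 1) *m Lmx lam th m n = LMmx m n.
Proof.
move=> u_unit th_eq; rewrite /Lmx /Mmx /LMmx addrK mulmx2.
have th_diff : th (m + 2) n - th m (n + 1)
    = th (m + 1) n * ((th m n)^-1 - (th (m + 2) (n - 1))^-1) * th (m + 1) n.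
  by rewrite th_eq addrC addKr.
congr mx2.
- rewrite mul1r addrAC -addrA -mulrBl -[_ - th (m + 2) n]opprB th_diff.
  by rewrite mulNr mulrK // mulrBr opprB addrA subrK.
- by rewrite mulr0 addr0 mul1r.
- rewrite mulNr mulrBl !mulrBr (mulKr u_unit) comm_alg !opprB.
  rewrite -addrA subrKA addrCA mulrA -mulrBl -mulrBr th_diff.
  by rewrite mulrA (mulKr u_unit) (mulrK u_unit) subrKC.
- by rewrite mulNr mulrN opprK mulVr // mulr0 addr0.
Qed.

End LaxPair.

Theorem proposition4p2 (F : fieldType) (R : unitAlgType F)
  (charF0 : [pchar F] =i pred0)
  (divR : forall x : R, x != 0 -> x \is a GRing.unit)
  (lam : F) (th : int -> int -> R)
  (th_unit : forall m n, th m n \is a GRing.unit)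
  (th_eq : forall m n,
     th (m + 2) n = th m (n + 1)
       + th (m + 1) n * ((th m n)^-1 - (th (m + 2) (n - 1))^-1) * th (m + 1) n) :
  forall m n : int,
    Lmx lam th (m - 1) n *m Mmx lam th m n = Mmx lam th m (n + 1) *m Lmx lam th m n.
Proof.
by move=> m n; rewrite Lmx_prev_Mmx // Mmx_next_Lmx.
Qed.
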